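(* Let $\mathbf K\in\mathbb R^{n\times d}$ have rows $\mathbf k_1,\dots,\mathbf k_n$, $\beta>0$, $\mathbf H=(\exp(\beta\langle\mathbf k_i,\mathbf k_l\rangle))_{i,l}$, and for $s\in\{0,1,2,\dots\}$ let $\mathbf T^s$ be the order-$s$ Taylor approximation with entries $\mathbf T^s_{il}=\sum_{|\alpha|\le s}\phi_\alpha(\mathbf k_i)\phi_\alpha(\mathbf k_l)$, where for a multi-index $\alpha\in\mathbb N_0^d$, $\phi_\alpha(\mathbf k)=\sqrt{\frac{1}{|\alpha|!}\binom{|\alpha|}{\alpha}\beta^{|\alpha|}}\,\mathbf k^\alpha$. Then $\mathrm{rank}(\mathbf T^s)\le\binom{s+d}{d}$, $\mathbf T^s\preceq\mathbf H$, and $$\|\mathbf H-\mathbf T^s\|_*\le n\exp(\beta\|\mathbf K\|_{2,\infty}^2)\left(\frac{e\beta\|\mathbf K\|_{2,\infty}^2}{s+1}\right)^{s+1}.$$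
   Context: Multi-index notation: $|\alpha|=\alpha_1+\dots+\alpha_d$, $\binom{s}{\alpha}=\frac{s!}{\alpha_1!\cdots\alpha_d!}$, $\mathbf k^\alpha=\prod_j\mathbf k_j^{\alpha_j}$. Equivalently $\mathbf T^s_{il}=\sum_{p=0}^s\frac1{p!}(\beta\langle\mathbf k_i,\mathbf k_l\rangle)^p$. $\|\mathbf K\|_{2,\infty}$ is the maximal Euclidean row norm, $\|\cdot\|_*$ the nuclear norm, $\preceq$ the Loewner order. *)

From HB Require Import structures.
From mathcomp Require Import all_boot all_order all_algebra.
From mathcomp Require Import polyrcf.
From mathcomp Require Import reals.
From mathcomp.analysis Require Import sequences exp.
Set Implicit Arguments. Unset Strict Implicit. Unset Printing Implicit Defensive.
Import Order.TTheory GRing.Theory Num.Theory.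
Local Open Scope ring_scope.

Section Defs.
Variable R : realType.

Definition rowdot n d (K : 'M[R]_(n, d)) (i l : 'I_n) : R :=
  \sum_(j < d) K i j * K l j.

Definition expKernel n d (beta : R) (K : 'M[R]_(n, d)) : 'M[R]_n :=
  \matrix_(i, l) expR (beta * rowdot K i l).

Definition mi_abs d s (a : {ffun 'I_d -> 'I_s.+1}) : nat := (\sum_(j < d) a j)%N.

Definition multinom d s (a : {ffun 'I_d -> 'I_s.+1}) : R :=
  (mi_abs a)`!%:R / (\prod_(j < d) (a j)`!)%:R.

Definition phi d s (beta : R) (a : {ffun 'I_d -> 'I_s.+1}) (k : 'rV[R]_d) : R :=
  Num.sqrt ((mi_abs a)`!%:R^-1 * multinom a * beta ^+ mi_abs a)
  * \prod_(j < d) k 0 j ^+ a j.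

(* Multi-indices with |alpha| <= s have all entries <= s, so they are
   enumerated as functions 'I_d -> 'I_(s+1) filtered by |alpha| <= s. *)
Definition taylorMx n d (s : nat) (beta : R) (K : 'M[R]_(n, d)) : 'M[R]_n :=
  \matrix_(i, l) \sum_(a : {ffun 'I_d -> 'I_s.+1} | (mi_abs a <= s)%N)
                   phi beta a (row i K) * phi beta a (row l K).

Definition loewner_le n (A B : 'M[R]_n) : Prop :=
  (B - A)^T = B - A /\ forall x : 'cV[R]_n, 0 <= (x^T *m (B - A) *m x) 0 0.

Definition norm2inf n d (K : 'M[R]_(n, d)) : R :=
  \big[Num.max/0]_(i < n) Num.sqrt (\sum_(j < d) K i j ^+ 2).

(* nuclear norm = sum of singular values (with multiplicity); singular values
   are the square roots of the eigenvalues of A^T A, i.e. of the roots of its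
   characteristic polynomial counted with multiplicity. *)
Definition nuclear_norm m n (A : 'M[R]_(m, n)) : R :=
  let p := char_poly (A^T *m A) in
  \sum_(x <- rootsR p) (mup x p)%:R * Num.sqrt x.

End Defs.

(* Splitting the sum over multi-indices by |alpha| and applying the multinomial
   theorem, T^s_il is the degree-s Taylor polynomial of exp at y = beta <k_i, k_l>,
   while T^s is a sum of one rank-one matrix per multi-index with |alpha| <= s.
   The entries of H - T^s are the tails sum_(p > s) y^p / p!; as a matrix this tail
   is a limit of nonnegative combinations of Hadamard powers of the Gram matrix
   (K K^T)^(o p), which are Gram matrices of tensor powers of the rows, so H - T^s
   is positive semidefinite. Its nuclear norm is then its trace, and each diagonal
   entry e^y - sum_(p <= s) y^p / p! with 0 <= y <= beta ||K||_{2,oo}^2 is at most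
   e^y y^(s+1) / (s+1)!, while (s+1)^(s+1) / (s+1)! <= e^(s+1). *)


From mathcomp Require Import reals topology normedtype sequences exp.
From mathcomp Require Import all_boot all_order all_algebra polyrcf complex.
From mathcomp Require Import ring.
Set Implicit Arguments. Unset Strict Implicit. Unset Printing Implicit Defensive.
Import Order.TTheory GRing.Theory Num.Theory.
Import numFieldNormedType.Exports.
Local Open Scope ring_scope.

Lemma natr_fact_neq0 (R : numDomainType) k : (k`!%:R : R) != 0.
Proof. by rewrite pnatr_eq0 -lt0n fact_gt0. Qed.

Definition exp_poly (R : numFieldType) (m : nat) (x : R) : {poly R} :=
  \poly_(k < m) (x ^+ k / k`!%:R).

Lemma coef_prod_exp_poly (R : numFieldType) d m (g : 'I_d -> R) p : (p < m)%N ->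
  (\prod_(j < d) exp_poly m (g j))`_p = (\sum_(j < d) g j) ^+ p / p`!%:R.
Proof.
elim: d g p => [|d IH] g p lt_pm.
  by rewrite !big_ord0 coef1 expr0n; case: p lt_pm => [|p] _; rewrite ?divr1 ?mul0r.
rewrite big_ord_recr coefM [in RHS]big_ord_recr /= [X in X ^+ p]addrC exprDn.
rewrite mulr_suml; apply: eq_bigr => -[j /=]; rewrite ltnS => le_jp _.
rewrite IH ?(leq_ltn_trans le_jp) // coef_poly (leq_ltn_trans (leq_subr _ _) lt_pm).
rewrite -(bin_fact le_jp) !natrM -mulr_natr.
have binC_neq0 : ('C(p, j)%:R : R) != 0 by rewrite pnatr_eq0 -lt0n bin_gt0.
by field; rewrite !natr_fact_neq0 binC_neq0.
Qed.

Lemma prod_poly_multi_index (R : comNzRingType) d s (c : 'I_d -> nat -> R) :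
  \prod_(j < d) \poly_(k < s.+1) c j k
   = \sum_(a : {ffun 'I_d -> 'I_s.+1}) (\prod_(j < d) c j (a j)) *: 'X^(mi_abs a).
Proof.
under eq_bigr do rewrite poly_def.
rewrite bigA_distr_bigA; apply: eq_bigr => a _.
rewrite -mul_polyC rmorph_prod /mi_abs -prodrXr -big_split /=.
by apply: eq_bigr => j _; rewrite mul_polyC.
Qed.

Lemma multinomial_theorem (R : numFieldType) d s (g : 'I_d -> R) p :
  (p < s.+1)%N ->
  \sum_(a : {ffun 'I_d -> 'I_s.+1} | mi_abs a == p)
     \prod_(j < d) (g j ^+ a j / (a j)`!%:R)
  = (\sum_(j < d) g j) ^+ p / p`!%:R.
Proof.
move=> lt_ps; rewrite -(coef_prod_exp_poly g lt_ps) prod_poly_multi_index.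
rewrite coef_sum big_mkcond /=; apply: eq_bigr => a _.
by rewrite coefZ coefXn eq_sym; case: eqP; rewrite ?mulr1 ?mulr0.
Qed.

Lemma phi_mul (R : realType) d s (beta : R) (a : {ffun 'I_d -> 'I_s.+1})
    (u v : 'rV[R]_d) : 0 <= beta ->
  phi beta a u * phi beta a v
  = beta ^+ mi_abs a * \prod_(j < d) ((u 0 j * v 0 j) ^+ a j / (a j)`!%:R).
Proof.
move=> beta_ge0; rewrite /phi mulrACA -expr2 sqr_sqrtr; last first.
  by rewrite /multinom !mulr_ge0 ?invr_ge0 ?ler0n ?exprn_ge0.
rewrite big_split /= -big_split /= prodfV.
under [X in _ = _ * (X * _)]eq_bigr do rewrite exprMn.
rewrite big_split /= /multinom -natr_prod.
have prod_fact_neq0 : ((\prod_(j < d) (a j)`!)%:R : R) != 0.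
  by rewrite pnatr_eq0 -lt0n prodn_gt0 // => j; rewrite fact_gt0.
by field; rewrite natr_fact_neq0 prod_fact_neq0.
Qed.

Lemma taylorMxE (R : realType) n d s (beta : R) (K : 'M[R]_(n, d)) i l :
  0 <= beta ->
  taylorMx s beta K i l = series (exp_coeff (beta * rowdot K i l)) s.+1.
Proof.
move=> beta_ge0; rewrite mxE /series /= big_mkord.
under eq_bigr do rewrite phi_mul //.
rewrite (partition_big (fun a : {ffun 'I_d -> 'I_s.+1} => inord (mi_abs a) : 'I_s.+1)
  xpredT) //=.
apply: eq_bigr => p _.
rewrite /exp_coeff /= exprMn -mulrA -(multinomial_theorem _ (ltn_ord p)) mulr_sumr.
apply: eq_big => a.
  apply/andP/eqP => [[le_as /eqP <-]|eq_ap]; first by rewrite inordK.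
  have le_as : (mi_abs a <= s)%N by rewrite eq_ap -ltnS.
  by split=> //; apply/eqP/val_inj; rewrite /= inordK.
case/andP => le_as /eqP <-; rewrite inordK //.
by under eq_bigr do rewrite !mxE.
Qed.

Lemma mxrank_sum (F : fieldType) m n (I : Type) (r : seq I) (P : pred I)
    (A : I -> 'M[F]_(m, n)) :
  (\rank (\sum_(i <- r | P i) A i)%R <= \sum_(i <- r | P i) \rank (A i))%N.
Proof.
elim: r => [|i r IH]; first by rewrite !big_nil mxrank0.
rewrite !big_cons; case: (P i) => //.
by rewrite (leq_trans (mxrank_add _ _)) // leq_add2l.
Qed.

Lemma card_multi_index_abs_le d s :
  (#|[pred a : {ffun 'I_d -> 'I_s.+1} | (mi_abs a <= s)%N]| <= 'C(s + d, d))%N.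
Proof.
rewrite addnC -card_partial_ord_partitions.
pose tuple_of (a : {ffun 'I_d -> 'I_s.+1}) := [tuple a j | j < d].
have tuple_of_inj : injective tuple_of.
  move=> a b /(congr1 (@tnth _ _)) eq_ab; apply/ffunP => j.
  by have := congr1 (fun t => t j) eq_ab; rewrite /= !tnth_mktuple.
rewrite -(card_imset _ tuple_of_inj); apply/subset_leq_card/subsetP => t.
case/imsetP => a; rewrite inE => le_as ->.
by rewrite big_map big_enum.
Qed.

Lemma taylorMx_rank (R : realType) n d s (beta : R) (K : 'M[R]_(n, d)) :
  (\rank (taylorMx s beta K) <= 'C(s + d, d))%N.
Proof.
have -> : taylorMx s beta K =
    \sum_(a : {ffun 'I_d -> 'I_s.+1} | (mi_abs a <= s)%N)
      (\col_i phi beta a (row i K) *m \row_l phi beta a (row l K)).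
  apply/matrixP => i l; rewrite !mxE summxE; apply: eq_bigr => a _.
  by rewrite !mxE big_ord1 !mxE.
apply: leq_trans (mxrank_sum _ _ _) _; apply: leq_trans (card_multi_index_abs_le d s).
rewrite -sum1_card leq_sum // => a _.
by rewrite (leq_trans (mxrankM_maxr _ _)) // rank_leq_row.
Qed.

Section ExpSeries.
Variable R : realType.
Implicit Types y : R.
Local Open Scope classical_set_scope.

Lemma series_exp_coeff_le_expR y m : 0 <= y -> series (exp_coeff y) m <= expR y.
Proof.
move=> y_ge0; apply: (nondecreasing_cvgn_le _ (is_cvg_series_exp_coeff y)).
by apply: nondecreasing_series => k _ _; apply: exp_coeff_ge0.
Qed.

Lemma exp_coeffD_le y m k : 0 <= y ->
  exp_coeff y (m + k) <= exp_coeff y m * exp_coeff y k.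
Proof.
move=> y_ge0; rewrite /exp_coeff /= exprD mulrACA -invfM -natrM.
have le_fact : (m`! * k`! <= (m + k)`!)%N.
  by rewrite -(bin_fact (leq_addr k m)) addKn leq_pmull // bin_gt0 leq_addr.
rewrite ler_wpM2l ?mulr_ge0 ?exprn_ge0 // lef_pV2 ?posrE ?ltr0n ?muln_gt0 ?fact_gt0 //.
by rewrite ler_nat.
Qed.

Lemma expR_sub_series_le y m : 0 <= y ->
  expR y - series (exp_coeff y) m <= exp_coeff y m * expR y.
Proof.
move=> y_ge0; rewrite lerBlDl.
apply: (cvgr_to_le (is_cvg_series_exp_coeff y)); exists m => // N /= le_mN.
rewrite /series /= (big_cat_nat (leq0n m) le_mN) /= lerD2l -{1}[m]add0n big_addn.
have tail_le : \sum_(0 <= k < N - m) exp_coeff y (k + m)%N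
    <= exp_coeff y m * series (exp_coeff y) (N - m)%N.
  rewrite /series /= mulr_sumr; apply: ler_sum => k _.
  by rewrite addnC; apply: exp_coeffD_le.
apply: le_trans tail_le _.
by rewrite ler_wpM2l ?exp_coeff_ge0 ?series_exp_coeff_le_expR.
Qed.

Lemma exp_coeff_le y m : 0 <= y ->
  exp_coeff y m <= (expR 1 * y / m%:R) ^+ m.
Proof.
move=> y_ge0; case: m => [|m]; first by rewrite /exp_coeff /= !expr0 divr1.
have m1_gt0 : (0 : R) < m.+1%:R by rewrite ltr0n.
have pow_div_fact_le : (m.+1%:R : R) ^+ m.+1 / m.+1`!%:R <= expR 1 ^+ m.+1.
  rewrite -expRM_natl mulr1; apply: le_trans (expR_ge1Dxn m (ler0n _ _)).
  by rewrite lerDr.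
have -> : exp_coeff y m.+1 = (y / m.+1%:R) ^+ m.+1 * (m.+1%:R ^+ m.+1 / m.+1`!%:R).
  rewrite /exp_coeff /= expr_div_n; field.
  by rewrite natr_fact_neq0 expf_neq0 // lt0r_neq0.
rewrite -mulrA [leRHS]exprMn [leRHS]mulrC ler_wpM2l // exprn_ge0 // divr_ge0 // ltW.
Qed.

End ExpSeries.

Section ExpKernelPsd.
Variable R : realType.
Local Open Scope classical_set_scope.

Lemma quad_formE n (M : 'M[R]_n) (x : 'cV_n) :
  (x^T *m M *m x) 0 0 = \sum_i \sum_l x i 0 * M i l * x l 0.
Proof.
rewrite mxE exchange_big /=; apply: eq_bigr => l _.
by rewrite mxE mulr_suml; apply: eq_bigr => i _; rewrite mxE.
Qed.

Lemma rowdot_exprn_psd n d (K : 'M[R]_(n, d)) (x : 'cV_n) p :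
  0 <= \sum_i \sum_l x i 0 * rowdot K i l ^+ p * x l 0.
Proof.
pose tensor i (f : {ffun 'I_p -> 'I_d}) := \prod_(t < p) K i (f t).
have rowdotXE i l : rowdot K i l ^+ p = \sum_f tensor i f * tensor l f.
  rewrite -[p in LHS]card_ord -prodr_const bigA_distr_bigA /=.
  by apply: eq_bigr => f _; rewrite -big_split.
have -> : \sum_i \sum_l x i 0 * rowdot K i l ^+ p * x l 0
    = \sum_f (\sum_i x i 0 * tensor i f) ^+ 2.
  under eq_bigr do under eq_bigr do rewrite rowdotXE mulr_sumr mulr_suml.
  under eq_bigr do rewrite exchange_big /=.
  rewrite exchange_big /=; apply: eq_bigr => f _.
  rewrite expr2 mulr_suml; apply: eq_bigr => i _; rewrite mulr_sumr.
  by apply: eq_bigr => l _; ring.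
by apply: sumr_ge0 => f _; rewrite sqr_ge0.
Qed.

Lemma expKernel_sub_taylorE n d s (beta : R) (K : 'M[R]_(n, d)) i l : 0 <= beta ->
  (expKernel beta K - taylorMx s beta K) i l
   = expR (beta * rowdot K i l) - series (exp_coeff (beta * rowdot K i l)) s.+1.
Proof. by move=> beta_ge0; rewrite !mxE -taylorMxE // mxE. Qed.

Lemma expKernel_sub_taylor_sym n d s (beta : R) (K : 'M[R]_(n, d)) : 0 <= beta ->
  (expKernel beta K - taylorMx s beta K)^T = expKernel beta K - taylorMx s beta K.
Proof.
move=> beta_ge0; apply/matrixP => i l; rewrite mxE !expKernel_sub_taylorE //.
by rewrite /rowdot; under eq_bigr do rewrite mulrC.
Qed.

Lemma expKernel_sub_taylor_psd n d s (beta : R) (K : 'M[R]_(n, d)) (x : 'cV_n) :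
  0 <= beta -> 0 <= (x^T *m (expKernel beta K - taylorMx s beta K) *m x) 0 0.
Proof.
move=> beta_ge0; rewrite quad_formE.
under eq_bigr do under eq_bigr do rewrite expKernel_sub_taylorE //.
set g := rowdot K.
pose quad N := \sum_i \sum_l x i 0 *
  (series (exp_coeff (beta * g i l)) N - series (exp_coeff (beta * g i l)) s.+1) * x l 0.
apply: (cvgr_to_ge (_ : quad N @[N --> \oo] --> _)).
  apply: cvg_big => // [|i _]; first exact: add_continuous.
  apply: cvg_big => // [|l _]; first exact: add_continuous.
  apply: cvgMl; apply: cvgMr; apply: cvgB; last exact: cvg_cst.
  exact: is_cvg_series_exp_coeff.
exists s.+1 => // N /= le_sN.
have -> : quad N = \sum_(s.+1 <= p < N) (beta ^+ p / p`!%:R) *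
    (\sum_i \sum_l x i 0 * g i l ^+ p * x l 0).
  rewrite /quad; symmetry.
  under eq_bigr do rewrite mulr_sumr.
  rewrite exchange_big /=; apply: eq_bigr => i _.
  under eq_bigr do rewrite mulr_sumr.
  rewrite exchange_big /=; apply: eq_bigr => l _.
  rewrite /series /= (big_cat_nat (leq0n _) le_sN) /= addrC addrK.
  rewrite mulr_sumr mulr_suml; apply: eq_bigr => p _; rewrite /exp_coeff /= exprMn; ring.
apply: sumr_ge0 => p _; apply: mulr_ge0; last exact: rowdot_exprn_psd.
by rewrite divr_ge0 ?exprn_ge0 ?ler0n.
Qed.

End ExpKernelPsd.

Lemma char_poly_similar (F : fieldType) n (P M : 'M[F]_n) : P \in unitmx ->
  char_poly (invmx P *m M *m P) = char_poly M.
Proof.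
move=> P_unit; rewrite /char_poly /char_poly_mx.
set PX := map_mx polyC P; set PVX := map_mx polyC (invmx P).
have PVX_PX : PVX *m PX = 1%:M by rewrite -map_mxM mulVmx // map_mx1.
have X_similar : ('X%:M : 'M[{poly F}]_n) = PVX *m 'X%:M *m PX.
  by rewrite -mulmxA -scalar_mxC mulmxA PVX_PX mul1mx.
rewrite {1}X_similar !map_mxM -/PX -/PVX -mulmxBl -mulmxBr !det_mulmx mulrAC.
by rewrite -det_mulmx PVX_PX det1 mul1r.
Qed.

Lemma mup_prod_XsubC (R : fieldType) x (r : seq R) :
  mup x (\prod_(y <- r) ('X - y%:P)) = count_mem x r.
Proof.
elim: r => [|y r IH]; first by rewrite big_nil mupNroot // root1.
rewrite big_cons mupM ?polyXsubC_eq0 ?monic_neq0 ?monic_prod_XsubC //.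
by rewrite -['X - y%:P]expr1 mup_XsubCX IH /=; case: eqP.
Qed.

Lemma sum_count_mem_mul (R : nmodType) (T : eqType) (l r : seq T) (g : T -> R) :
  uniq r -> {subset l <= r} ->
  \sum_(x <- r) g x *+ count_mem x l = \sum_(y <- l) g y.
Proof.
move=> r_uniq; elim: l => [|y l IH] l_sub.
  by rewrite big_nil big1.
rewrite big_cons -IH; last by move=> z z_l; apply: l_sub; rewrite inE z_l orbT.
have y_r : y \in r by apply: l_sub; rewrite inE eqxx.
under eq_bigr do rewrite /= mulrnDr.
rewrite big_split /= (bigD1_seq y y_r r_uniq) /= eqxx big1 ?addr0 //.
by move=> x; rewrite eq_sym => /negPf ->.
Qed.

Section RealSymmetric.
Variable R : rcfType.
Local Notation toC := (real_complex R).

Lemma rootsR_prod_XsubC_sum (r : seq R) (g : R -> R) :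
  let p := \prod_(y <- r) ('X - y%:P) in
  \sum_(x <- rootsR p) (mup x p)%:R * g x = \sum_(y <- r) g y.
Proof.
move=> p; have p_neq0 : p != 0 by rewrite monic_neq0 ?monic_prod_XsubC.
under eq_bigr do rewrite mup_prod_XsubC mulr_natl.
apply: sum_count_mem_mul; first exact/lt_sorted_uniq/sorted_roots.
by move=> y y_r; rewrite -(roots_on_rootsR p_neq0) root_prod_XsubC y_r.
Qed.

Lemma symmetric_diagonalization n (A : 'M[R]_n) : A^T = A ->
  exists2 P : 'M[R[i]]_n, P \in unitmx &
  exists lam : 'I_n -> R, map_mx toC A = invmx P *m diag_mx (\row_i toC (lam i)) *m P.
Proof.
move=> A_sym; set AC := map_mx toC A.
have AC_sym : AC \is symmetricmx.
  apply/is_hermitianmxP; rewrite expr0 scale1r.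
  by apply/matrixP => i j; rewrite !mxE -[in LHS]A_sym mxE.
have AC_real : AC \is a realmx.
  by apply/mxOverP => i j; rewrite mxE; apply/complex_realP; exists (A i j).
have AC_herm := realsym_hermsym AC_sym AC_real.
have /orthomx_spectralP AC_spectral := hermitian_normalmx AC_herm.
exists (spectralmx AC); first exact: spectral_unit.
exists (fun i => complex.Re (spectral_diag AC 0 i)).
rewrite {1}AC_spectral; congr (_ *m diag_mx _ *m _); apply/rowP => i; rewrite mxE.
by rewrite RRe_real //; apply: (mxOverP (hermitian_spectral_diag_real AC_herm)).
Qed.

Lemma char_poly_diag_real n (lam : 'I_n -> R) :
  char_poly (diag_mx (\row_i toC (lam i))) = map_poly toC (\prod_i ('X - (lam i)%:P)).
Proof.
rewrite char_poly_trig ?diag_mx_is_trig // rmorph_prod; apply: eq_bigr => i _.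
by rewrite !mxE eqxx mulr1n rmorphB /= map_polyX map_polyC.
Qed.

Lemma symmetric_spectrum n (A : 'M[R]_n) : A^T = A -> exists lam : 'I_n -> R,
  [/\ char_poly A = \prod_i ('X - (lam i)%:P),
      char_poly (A^T *m A) = \prod_i ('X - (lam i ^+ 2)%:P) &
      \tr A = \sum_i lam i].
Proof.
move=> A_sym; have [P P_unit [lam A_diag]] := symmetric_diagonalization A_sym.
set D := diag_mx _ in A_diag.
have DD : D *m D = diag_mx (\row_i toC (lam i ^+ 2)).
  apply/matrixP => i j; rewrite mul_diag_mx !mxE.
  by case: eqP => _; rewrite ?mulr1n ?mulr0n ?mulr0 // rmorphXn expr2.
exists lam; split; apply: (@map_poly_inj _ _ toC) || apply: (@complexI R).
- by rewrite map_char_poly A_diag char_poly_similar // char_poly_diag_real.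
- rewrite map_char_poly A_sym map_mxM A_diag -!mulmxA (mulmxA P) mulmxV // mul1mx.
  by rewrite !mulmxA -(mulmxA (invmx P) D) DD char_poly_similar // char_poly_diag_real.
- have -> : toC (\tr A) = \tr (map_mx toC A).
    by rewrite /mxtrace rmorph_sum; apply: eq_bigr => i _; rewrite mxE.
  rewrite A_diag mxtrace_mulC mulmxA mulmxV // mul1mx mxtrace_diag rmorph_sum.
  by apply: eq_bigr => i _; rewrite mxE.
Qed.

Lemma psd_root_char_poly_ge0 n (A : 'M[R]_n) lam :
  (forall x : 'cV_n, 0 <= (x^T *m A *m x) 0 0) -> root (char_poly A) lam -> 0 <= lam.
Proof.
move=> A_psd; rewrite -eigenvalue_root_char => /eigenvalueP [v vA v_neq0].
have := A_psd v^T; rewrite trmxK vA -scalemxAl mxE.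
suff vv_gt0 : 0 < (v *m v^T) 0 0 by rewrite (pmulr_lge0 _ vv_gt0).
have sq_ge0 (i : 'I_n) : true -> 0 <= v 0 i * v^T i 0 by rewrite mxE -expr2 sqr_ge0.
rewrite mxE lt0r sumr_ge0 ?andbT //.
apply: contra v_neq0 => /eqP/(psumr_eq0P sq_ge0) vv_eq0.
apply/eqP/rowP => j; have /eqP := vv_eq0 j isT.
by rewrite !mxE mulf_eq0 orbb => /eqP.
Qed.

End RealSymmetric.

Lemma nuclear_norm_psd (R : realType) n (A : 'M[R]_n) : A^T = A ->
  (forall x : 'cV_n, 0 <= (x^T *m A *m x) 0 0) -> nuclear_norm A = \tr A.
Proof.
move=> A_sym A_psd; have [lam [charA charAA trA]] := symmetric_spectrum A_sym.
have prod_enum (f : 'I_n -> R) : \prod_i ('X - (f i)%:P) =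
    \prod_(y <- [seq f i | i <- enum 'I_n]) ('X - y%:P) by rewrite big_map big_enum.
have lam_ge0 i : 0 <= lam i.
  apply: psd_root_char_poly_ge0 A_psd _.
  by rewrite charA prod_enum root_prod_XsubC map_f // mem_enum.
rewrite /nuclear_norm charAA trA prod_enum rootsR_prod_XsubC_sum big_map big_enum.
by apply: eq_bigr => i _; rewrite sqrtr_sqr ger0_norm.
Qed.

Lemma rowdot_diag_le_norm2inf (R : realType) n d (K : 'M[R]_(n, d)) i :
  rowdot K i i <= norm2inf K ^+ 2.
Proof.
have rowdotE : rowdot K i i = \sum_(j < d) K i j ^+ 2.
  by apply: eq_bigr => j _; rewrite expr2.
have le_norm : Num.sqrt (\sum_(j < d) K i j ^+ 2) <= norm2inf K := le_bigmax _ _ i.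
have sum_ge0 : 0 <= \sum_(j < d) K i j ^+ 2 by apply: sumr_ge0 => j _; rewrite sqr_ge0.
rewrite rowdotE -(sqr_sqrtr sum_ge0) lerXn2r ?nnegrE ?sqrtr_ge0 //.
exact: le_trans (sqrtr_ge0 _) le_norm.
Qed.

Lemma expKernel_sub_taylor_diag_le (R : realType) n d s (beta : R) (K : 'M[R]_(n, d)) i :
  0 <= beta ->
  (expKernel beta K - taylorMx s beta K) i i
   <= expR (beta * norm2inf K ^+ 2)
      * (expR 1 * beta * norm2inf K ^+ 2 / (s.+1)%:R) ^+ s.+1.
Proof.
move=> beta_ge0; rewrite expKernel_sub_taylorE // -(mulrA (expR 1)).
set y := beta * rowdot K i i; set Y := beta * norm2inf K ^+ 2.
have y_ge0 : 0 <= y by rewrite mulr_ge0 // sumr_ge0 // => j _; rewrite -expr2 sqr_ge0.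
have le_yY : y <= Y by rewrite ler_wpM2l // rowdot_diag_le_norm2inf.
have Y_ge0 := le_trans y_ge0 le_yY.
apply: le_trans (expR_sub_series_le s.+1 y_ge0) _.
rewrite [leLHS]mulrC ler_pM ?expR_ge0 ?exp_coeff_ge0 ?ler_expR //.
apply: le_trans (exp_coeff_le s.+1 Y_ge0).
by rewrite ler_wpM2r ?invr_ge0 ?ler0n // lerXn2r.
Qed.

Theorem lemmaE2 (R : realType) (n d s : nat) (K : 'M[R]_(n, d)) (beta : R)
  (hbeta : 0 < beta) :
  [/\ (\rank (taylorMx s beta K) <= 'C(s + d, d))%N,
      loewner_le (taylorMx s beta K) (expKernel beta K) &
      nuclear_norm (expKernel beta K - taylorMx s beta K)
        <= n%:R * expR (beta * norm2inf K ^+ 2)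
           * (expR 1 * beta * norm2inf K ^+ 2 / (s.+1)%:R) ^+ s.+1].
Proof.
have beta_ge0 := ltW hbeta.
have HT_sym := expKernel_sub_taylor_sym s K beta_ge0.
have HT_psd x := expKernel_sub_taylor_psd s K x beta_ge0.
split; [exact: taylorMx_rank | by split |].
rewrite nuclear_norm_psd // -mulrA mulr_natl -[X in _ *+ X](card_ord n) -sumr_const.
by apply: ler_sum => i _; apply: expKernel_sub_taylor_diag_le.
Qed.
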